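(* Let $F$ be a field, let $L$ be a finite-dimensional left Leibniz algebra over $F$, and let $V \neq 0$ be a finite-dimensional $L$-bimodule, with left action $T$ and right action $S$, i.e. $T_a(v) = av$ and $S_a(v) = va$ for $a \in L$, $v \in V$. Suppose that $T_a$ is a nilpotent linear map of $V$ for every $a \in L$. Then $S_a$ is nilpotent for every $a \in L$, and there exists $v \in V$, $v \neq 0$, such that $T_a(v) = S_a(v) = 0$ for all $a \in L$.
   Context: A left Leibniz algebra over $F$ is a vector space $L$ with a bilinear product $(x,y)\mapsto xy$ satisfying the left Leibniz identity $x(yz) = (xy)z + y(xz)$ for all $x,y,z \in L$. An $L$-bimodule (equivalently, a representation $(S,T)$ of $L$) is a vector space $V$ together with bilinear maps $L \times V \to V$, $(a,v)\mapsto av$, and $V \times L \to V$, $(v,a) \mapsto va$, such that the split extension $X = V \oplus L$ with product $(v+a)(w+b) = (aw + vb) + ab$ (for $v,w\in V$, $a,b \in L$) is a left Leibniz algebra. *)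

From HB Require Import structures.
From mathcomp Require Import all_boot all_order all_algebra.
Set Implicit Arguments. Unset Strict Implicit. Unset Printing Implicit Defensive.
Import GRing.Theory.
Local Open Scope ring_scope.

Definition bilinear_map (F : fieldType) (A B C : lmodType F)
  (f : A -> B -> C) : Prop :=
  (forall (k : F) (x y : A) (z : B), f (k *: x + y) z = k *: f x z + f y z) /\
  (forall (k : F) (x : A) (y z : B), f x (k *: y + z) = k *: f x y + f x z).

Definition left_leibniz_identity (X : zmodType) (mul : X -> X -> X) : Prop :=
  forall x y z : X, mul x (mul y z) = mul (mul x y) z + mul y (mul x z).

Definition left_Leibniz_algebra (F : fieldType) (L : lmodType F)
  (mul : L -> L -> L) : Prop :=
  bilinear_map mul /\ left_leibniz_identity mul.

Definition split_product (F : fieldType) (L V : lmodType F)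
  (mul : L -> L -> L) (actl : L -> V -> V) (actr : V -> L -> V)
  (x y : V * L) : V * L :=
  (actl x.2 y.1 + actr x.1 y.2, mul x.2 y.2).

Definition Leibniz_bimodule (F : fieldType) (L V : lmodType F)
  (mul : L -> L -> L) (actl : L -> V -> V) (actr : V -> L -> V) : Prop :=
  bilinear_map actl /\ bilinear_map actr /\
  left_leibniz_identity (split_product mul actl actr).

Definition nilpotent_map (V : zmodType) (f : V -> V) : Prop :=
  exists n : nat, forall v : V, iter n f v = 0.

From HB Require Import structures.
From mathcomp Require Import all_boot all_order all_algebra zify.

(* The left actions [T_a] span a Lie algebra of nilpotent endomorphisms of [V],
   because the bimodule axioms give [T_a T_b - T_b T_a = T_(ab)]; hence Engel's
   theorem applies to them. The same axioms give [S_c (T_b + S_b) = 0], so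
   [S_a^(k+1) = (-1)^k S_a T_a^k] is nilpotent, and the common kernel [K] of the
   [S_a] is stable under the [T_a]. If [K <> 0], Engel's theorem yields a nonzero
   vector of [K] killed by every [T_a]; if [K = 0], then [S_b = - T_b] and a
   common null vector of the [T_a] on [V] is killed by the [S_a] as well.
   Engel's theorem itself is proved in the form "a Lie algebra of nilpotent maps
   kills a nonzero vector of every invariant quotient", by induction on its
   dimension: ad-nilpotency and the induction hypothesis applied to [ad H] let a
   proper subalgebra [H] be enlarged until it is an ideal of codimension one. *)

Set Implicit Arguments. Unset Strict Implicit. Unset Printing Implicit Defensive.
Import GRing.Theory.
Local Open Scope ring_scope.

Lemma commr_nilpotentB (R : pzRingType) (x y : R) m :
  GRing.comm x y -> x ^+ m = 0 -> y ^+ m = 0 -> (x - y) ^+ (m + m) = 0.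
Proof.
move=> cxy xm0 ym0; rewrite exprBn_comm //; apply: big1 => -[i /=]; rewrite ltnS => le_i _.
have [le_mi|lt_im] := leqP m i.
  have -> : y ^+ i = 0 by rewrite -(subnK le_mi) exprD ym0 mulr0.
  by rewrite mulr0 mul0rn.
have le_m : (m <= m + m - i)%N.
  by rewrite leq_subRL ?leq_add2r ?(ltnW lt_im) // ltn_addr.
have -> : x ^+ (m + m - i) = 0 by rewrite -(subnK le_m) exprD xm0 mulr0.
by rewrite mulr0 mul0r mul0rn.
Qed.

Lemma commr_jacobi (R : pzRingType) (x y z : R) :
  (x * y - y * x) * z - z * (x * y - y * x) =
  x * (y * z - z * y) - (y * z - z * y) * x
    - (y * (x * z - z * x) - (x * z - z * x) * y).
Proof.
rewrite !(mulrBl, mulrBr) !mulrA !opprB !addrA (addrC _ (y * z * x)) !addrA.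
rewrite [in RHS](addrAC _ (- (x * z * y))) [in RHS](addrAC _ (- (x * z * y))) subrK.
rewrite (addrC (y * z * x)) (addrAC _ (y * z * x)) addrK.
rewrite -!addrA; congr (_ + _).
by rewrite addrCA (addrC (- (y * x * z))).
Qed.

Section LinearFun.
Variables (F : fieldType) (A B : vectType F) (f : A -> B).
Hypothesis f_linear : linear f.

Let f_lin : {linear A -> B} := HB.pack f (GRing.isLinear.Build F A B *:%R f f_linear).

Lemma linear_fun0 : f 0 = 0. Proof. exact: (linear0 f_lin). Qed.
Lemma linear_funD x y : f (x + y) = f x + f y. Proof. exact: (linearD f_lin). Qed.
Lemma linear_funZ k x : f (k *: x) = k *: f x. Proof. exact: (linearZ_LR f_lin). Qed.
Lemma linfun_linE : linfun f =1 f. Proof. exact: (lfunE f_lin). Qed.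

End LinearFun.

Section LfunRing.
Variables (F : fieldType) (X : vectType F).

(* Unlike the library's [lfun_comp_nzRingType], this needs no [dim X > 0]. *)
Definition lfun_ring : pzRingType := HB.pack 'End(X)
  (GRing.Zmodule_isPzRing.Build 'End(X) (@comp_lfunA _ X X X X)
    (@comp_lfun1l _ X X) (@comp_lfun1r _ X X)
    (@comp_lfunDl _ X X X) (@comp_lfunDr _ X X X)).

Lemma lfun_ring_iter (f : 'End(X)) n x : iter n f x = ((f : lfun_ring) ^+ n : 'End(X)) x.
Proof.
elim: n x => [|n IHn] x; first by rewrite expr0 id_lfunE.
by rewrite exprS iterS IHn /= comp_lfunE.
Qed.

Lemma nilpotent_lfunB (f g : 'End(X)) : (f \o g = g \o f)%VF ->
  nilpotent_map f -> nilpotent_map g -> nilpotent_map (f - g).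
Proof.
move=> fg_comm [m fm0] [n gn0].
have pow0 (h : 'End(X)) k : (forall x, iter k h x = 0) -> (h : lfun_ring) ^+ k = 0.
  by move=> hk0; apply/lfunP => x; rewrite -lfun_ring_iter hk0 zero_lfunE.
have fmn0 : (f : lfun_ring) ^+ (m + n) = 0 by rewrite exprD (pow0 _ _ fm0) mul0r.
have gmn0 : (g : lfun_ring) ^+ (m + n) = 0 by rewrite exprD (pow0 _ _ gn0) mulr0.
exists (m + n + (m + n))%N => x.
have fg_commr : GRing.comm (f : lfun_ring) g := fg_comm.
by rewrite lfun_ring_iter (commr_nilpotentB fg_commr fmn0 gmn0) zero_lfunE.
Qed.

End LfunRing.

Section LieBracket.
Variables (F : fieldType) (X : vectType F).
Implicit Types f g h : 'End(X).

Definition lfun_br f g : 'End(X) := (f \o g)%VF - (g \o f)%VF.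

Lemma lfun_brE f g x : lfun_br f g x = f (g x) - g (f x).
Proof. by rewrite /lfun_br add_lfunE opp_lfunE !comp_lfunE. Qed.

Lemma lfun_brC f g : lfun_br f g = - lfun_br g f.
Proof. by rewrite /lfun_br opprB. Qed.

Lemma lfun_brxx f : lfun_br f f = 0.
Proof. exact: subrr. Qed.

Lemma lfun_br_linear f : linear (lfun_br f).
Proof.
move=> k g h; apply/lfunP => x.
by rewrite !(lfun_brE, add_lfunE, scale_lfunE) linearP /= scalerBr opprD addrACA.
Qed.

Lemma lfun_br_linear_l g : linear (lfun_br ^~ g).
Proof.
move=> k f h; apply/lfunP => x.
by rewrite !(lfun_brE, add_lfunE, scale_lfunE) linearP /= scalerBr opprD addrACA.
Qed.

Lemma lfun_brDl f1 f2 g : lfun_br (f1 + f2) g = lfun_br f1 g + lfun_br f2 g.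
Proof. exact: linear_funD (lfun_br_linear_l g) _ _. Qed.

Lemma lfun_brZl k f g : lfun_br (k *: f) g = k *: lfun_br f g.
Proof. exact: linear_funZ (lfun_br_linear_l g) _ _. Qed.

Lemma lfun_brDr f g1 g2 : lfun_br f (g1 + g2) = lfun_br f g1 + lfun_br f g2.
Proof. exact: linear_funD (lfun_br_linear f) _ _. Qed.

Lemma lfun_brZr k f g : lfun_br f (k *: g) = k *: lfun_br f g.
Proof. exact: linear_funZ (lfun_br_linear f) _ _. Qed.

Definition lie_closed (G : {vspace 'End(X)}) :=
  {in G &, forall f g, lfun_br f g \in G}.

End LieBracket.

Section InvariantQuotients.
Variables (F : fieldType) (X : vectType F).
Implicit Types (G K : {vspace 'End(X)}) (U W : {vspace X}).

Definition stable G U := forall g x, g \in G -> x \in U -> g x \in U.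

Definition kills_invariant_quotients G := forall U W,
  ~~ (U <= W)%VS -> stable G U -> stable G W ->
  exists2 u, u \in U & u \notin W /\ {in G, forall g : 'End(X), g u \in W}.

Lemma kills_invariant_quotients0 : kills_invariant_quotients 0.
Proof.
move=> U W /subvPn[u Uu Wu] _ _; exists u => //; split=> // g.
by rewrite memv0 => /eqP->; rewrite zero_lfunE mem0v.
Qed.

Lemma stable_addv_line K y U : stable (K + <[y]>) U ->
  stable K U /\ (forall x, x \in U -> y x \in U).
Proof.
move=> stU; split=> [g x Kg|x]; apply: stU; first exact: (subvP (addvSl _ _)).
exact: (subvP (addvSr _ _)) (memv_line y).
Qed.

Lemma lie_closed_addv_line K y : lie_closed K ->
  {in K, forall k, lfun_br k y \in K} -> lie_closed (K + <[y]>).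
Proof.
move=> Klie Ky _ _ /memv_addP[k1 Kk1 [_ /vlineP[a ->] ->]]
  /memv_addP[k2 Kk2 [_ /vlineP[b ->] ->]].
apply: (subvP (addvSl K <[y]>)).
rewrite lfun_brDl !lfun_brDr !lfun_brZl !lfun_brZr lfun_brxx !scaler0 addr0.
rewrite (lfun_brC y) scalerN.
apply: memvD; first apply: memvD.
- exact: Klie.
- exact/memvZ/Ky.
- by rewrite memvN; exact/memvZ/Ky.
Qed.

Lemma kills_invariant_quotients_addv_line K (y : 'End(X)) :
  kills_invariant_quotients K -> nilpotent_map y ->
  {in K, forall k, lfun_br k y \in K} -> kills_invariant_quotients (K + <[y]>).
Proof.
move=> killK [m ym0] Ky U W nUW /stable_addv_line[stKU yU] /stable_addv_line[stKW yW].
have [u Uu [Wu Ku]] := killK U W nUW stKU stKW.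
(* The last iterate [y^j u] outside [W] is still killed modulo [W] by [K],
   because [y] normalizes [K]. *)
have Kyu j : {in K, forall k : 'End(X), k (iter j y u) \in W}.
  elim: j => [|j IHj] k Kk //=; first exact: Ku.
  have -> : k (y (iter j y u)) = y (k (iter j y u)) + lfun_br k y (iter j y u).
    by rewrite lfun_brE addrC subrK.
  by apply: memvD; [exact: yW (IHj k Kk) | exact: IHj _ (Ky k Kk)].
have [j Wj Wyj] : exists2 j, iter j y u \notin W & y (iter j y u) \in W.
  have exW : exists i, iter i y u \in W by exists m; rewrite ym0 mem0v.
  case: (ex_minnP exW) => -[|j]; first by rewrite (negPf Wu).
  by move=> Wyj min_j; exists j => //; apply: contraTN isT => /min_j; rewrite ltnn.
exists (iter j y u); first by elim: (j) => //= i IHi; exact: yU.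
split=> // _ /memv_addP[k Kk [_ /vlineP[a ->] ->]].
by rewrite add_lfunE scale_lfunE; apply: memvD; [exact: Kyu | exact: memvZ].
Qed.

End InvariantQuotients.

Section AdjointAction.
Variables (F : fieldType) (X : vectType F).
Implicit Types f g h : 'End(X).

Definition ad : 'Hom('End(X), 'End('End(X))) := linfun (fun f => linfun (lfun_br f)).

Lemma adE f g : ad f g = lfun_br f g.
Proof.
have ad_linear : linear (fun f => linfun (lfun_br f)).
  move=> k f1 f2; apply/lfunP => h.
  rewrite add_lfunE scale_lfunE !linfun_linE //; try exact: lfun_br_linear.
  exact: lfun_br_linear_l.
by rewrite /ad (linfun_linE ad_linear) (linfun_linE (lfun_br_linear f)).
Qed.

Lemma ad_lfun_br f g : ad (lfun_br f g) = lfun_br (ad f) (ad g).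
Proof.
apply/lfunP => h; rewrite lfun_brE !adE.
exact: (@commr_jacobi (lfun_ring X) f g h).
Qed.

Lemma nilpotent_ad f : nilpotent_map f -> nilpotent_map (ad f).
Proof.
move=> [m fm0].
have lmul_linear : linear (fun g : 'End(X) => (f \o g)%VF).
  by move=> a g h; rewrite comp_lfunDr comp_lfunZr.
have rmul_linear : linear (fun g : 'End(X) => (g \o f)%VF).
  by move=> a g h; rewrite comp_lfunDl comp_lfunZl.
pose lmul : 'End('End(X)) := linfun (fun g : 'End(X) => (f \o g)%VF).
pose rmul : 'End('End(X)) := linfun (fun g : 'End(X) => (g \o f)%VF).
have lmulE g : lmul g = (f \o g)%VF by exact: linfun_linE.
have rmulE g : rmul g = (g \o f)%VF by exact: linfun_linE.
have ad_split : ad f = lmul - rmul.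
  by apply/lfunP => g; rewrite adE add_lfunE opp_lfunE lmulE rmulE.
have lmul_rmul : (lmul \o rmul = rmul \o lmul)%VF.
  by apply/lfunP => g; rewrite !comp_lfunE lmulE rmulE lmulE rmulE comp_lfunA.
have lmul_nil : nilpotent_map lmul.
  exists m => g; apply/lfunP => x; rewrite zero_lfunE -(fm0 (g x)).
  by elim: m {fm0} g => //= n IHn g; rewrite lmulE comp_lfunE IHn.
have rmul_nil : nilpotent_map rmul.
  exists m => g; apply/lfunP => x; rewrite zero_lfunE -(linear0 g) -(fm0 x).
  by elim: m {fm0} g x => //= n IHn g x; rewrite rmulE comp_lfunE IHn -iterSr.
by rewrite ad_split; exact: nilpotent_lfunB.
Qed.

Lemma lie_closed_ad_img (K : {vspace 'End(X)}) : lie_closed K -> lie_closed (ad @: K).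
Proof.
move=> Klie _ _ /memv_imgP[f Kf ->] /memv_imgP[g Kg ->].
by rewrite -ad_lfun_br; apply/memv_img/Klie.
Qed.

Lemma nilpotent_ad_img (K : {vspace 'End(X)}) :
  {in K, forall f : 'End(X), nilpotent_map f} ->
  {in (ad @: K)%VS, forall h : 'End('End(X)), nilpotent_map h}.
Proof. by move=> Knil _ /memv_imgP[f Kf ->]; apply/nilpotent_ad/Knil. Qed.

Lemma exists_normalizer_outside (G K : {vspace 'End(X)}) :
  lie_closed G -> lie_closed K -> (K <= G)%VS -> ~~ (G <= K)%VS ->
  kills_invariant_quotients (ad @: K) ->
  exists2 y, y \in G & y \notin K /\ {in K, forall k, lfun_br k y \in K}.
Proof.
move=> Glie Klie sKG nsGK killadK.
have stable_adK (V : {vspace 'End(X)}) : (K <= V)%VS -> lie_closed V -> stable (ad @: K) V.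
  move=> sKV Vlie _ g /memv_imgP[k Kk ->] Vg.
  by rewrite adE; apply: Vlie Vg; apply: (subvP sKV).
have [y Gy [Ky adKy]] :=
  killadK G K nsGK (stable_adK _ sKG Glie) (stable_adK _ (subvv K) Klie).
exists y => //; split=> // k Kk.
by rewrite -adE; apply: adKy; apply: memv_img.
Qed.

End AdjointAction.

Arguments ad {F X}.

Section EngelInduction.
Variables (F : fieldType) (n : nat).
Hypothesis IHn : forall (X : vectType F) (G : {vspace 'End(X)}),
  (\dim G < n)%N -> lie_closed G -> {in G, forall g : 'End(X), nilpotent_map g} ->
  kills_invariant_quotients G.

(* Engel's theorem for [ad K] acting on [G / K] yields [y] normalizing [K]:
   then either [G = K + <[y]>] or [K + <[y]>] is a larger proper subalgebra. *)
Lemma kills_invariant_quotients_over_subalgebra (X : vectType F)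
    (G K : {vspace 'End(X)}) :
  (\dim G <= n)%N -> lie_closed G -> {in G, forall g : 'End(X), nilpotent_map g} ->
  lie_closed K -> (K <= G)%VS -> K != G -> kills_invariant_quotients G.
Proof.
move=> dimG Glie Gnil; have [k] := ubnP (\dim G - \dim K).
elim: k K => // k IHk K /ltnSE dK Klie sKG nKG.
have ltKG : (\dim K < \dim G)%N by rewrite (ltn_leqif (dimv_leqif_eq sKG)).
have Knil : {in K, forall g : 'End(X), nilpotent_map g}.
  by move=> g Kg; apply/Gnil/(subvP sKG).
have dimK : (\dim K < n)%N := leq_trans ltKG dimG.
have nsGK : ~~ (G <= K)%VS by apply: contra nKG => sGK; rewrite eqEsubv sKG.
have dim_adK : (\dim (ad @: K) < n)%N.
  by rewrite (leq_trans _ dimK) // ltnS -(limg_ker_dim ad K) leq_addl.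
have [y Gy [Ky Ny]] := exists_normalizer_outside Glie Klie sKG nsGK
  (IHn dim_adK (lie_closed_ad_img Klie) (nilpotent_ad_img Knil)).
have sKyG : (K + <[y]> <= G)%VS by rewrite subv_add sKG -memvE.
have [sGKy|nsGKy] := boolP (G <= K + <[y]>)%VS.
  have -> : G = (K + <[y]>)%VS by apply/eqP; rewrite eqEsubv sGKy.
  exact: kills_invariant_quotients_addv_line (IHn dimK Klie Knil) (Gnil _ Gy) Ny.
have ltKKy : (\dim K < \dim (K + <[y]>))%N.
  by rewrite (ltn_leqif (dimv_leqif_sup (addvSl K <[y]>))) subv_add subvv -memvE.
have leKyG := dimvS sKyG.
apply: (IHk (K + <[y]>)%VS) => //; first by lia.
- exact: lie_closed_addv_line.
- by apply: contraNneq nsGKy => ->.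
Qed.

End EngelInduction.

Theorem engel_kills_invariant_quotients (F : fieldType) (X : vectType F)
    (G : {vspace 'End(X)}) :
  lie_closed G -> {in G, forall g : 'End(X), nilpotent_map g} ->
  kills_invariant_quotients G.
Proof.
have [n] := ubnP (\dim G); elim: n X G => // n IHn X G /ltnSE dimG Glie Gnil.
have [-> | nG0] := eqVneq G 0%VS; first exact: kills_invariant_quotients0.
apply: (kills_invariant_quotients_over_subalgebra IHn dimG Glie Gnil (K := 0%VS)).
- by move=> f g; rewrite !memv0 => /eqP-> /eqP->; rewrite lfun_brxx.
- exact: sub0v.
- by rewrite eq_sym.
Qed.

Lemma engel_common_kernel (F : fieldType) (X : vectType F)
    (G : {vspace 'End(X)}) (U : {vspace X}) :
  lie_closed G -> {in G, forall g : 'End(X), nilpotent_map g} ->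
  stable G U -> U != 0%VS ->
  exists2 u, u \in U & u != 0 /\ {in G, forall g : 'End(X), g u = 0}.
Proof.
move=> Glie Gnil stU U0.
have stable0 : stable G 0 by move=> g x _; rewrite memv0 => /eqP->; rewrite linear0 mem0v.
have nsU0 : ~~ (U <= 0)%VS by rewrite subv0.
have [u Uu [u0 Gu]] := engel_kills_invariant_quotients Glie Gnil nsU0 stU stable0.
by rewrite memv0 in u0; exists u => //; split=> // g /Gu; rewrite memv0 => /eqP.
Qed.

Section LeibnizBimodule.
Variables (F : fieldType) (L V : vectType F).
Variables (mul : L -> L -> L) (actl : L -> V -> V) (actr : V -> L -> V).
Hypothesis bimod : Leibniz_bimodule mul actl actr.

Let actl_linear a : linear (actl a).
Proof. by case: bimod => [[_ actlB] _] k; exact: actlB. Qed.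
Let actl_linear_l v : linear (actl ^~ v).
Proof. by case: bimod => [[actlB _] _] k x y; exact: actlB. Qed.
Let actr_linear v : linear (actr v).
Proof. by case: bimod => [_ [[_ actrB] _]] k; exact: actrB. Qed.
Let actr_linear_l a : linear (actr ^~ a).
Proof. by case: bimod => [_ [[actrB _] _]] k x y; exact: actrB. Qed.

Let actlr0 a : actl a 0 = 0. Proof. exact: linear_fun0. Qed.
Let actl0 v : actl 0 v = 0. Proof. exact: linear_fun0 (actl_linear_l v). Qed.
Let actrr0 v : actr v 0 = 0. Proof. exact: linear_fun0. Qed.
Let actr0 a : actr 0 a = 0. Proof. exact: linear_fun0 (actr_linear_l a). Qed.
Let zero_actions := (actlr0, actl0, actrr0, actr0, addr0, add0r).

Lemma actl_mul a b u : actl a (actl b u) = actl (mul a b) u + actl b (actl a u).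
Proof.
case: bimod => _ [_ /(_ (0, a) (0, b) (u, 0)) /(congr1 fst)].
by rewrite /split_product /= !zero_actions.
Qed.

Lemma actl_actr a w c : actl a (actr w c) = actr (actl a w) c + actr w (mul a c).
Proof.
case: bimod => _ [_ /(_ (0, a) (w, 0) (0, c)) /(congr1 fst)].
by rewrite /split_product /= !zero_actions.
Qed.

Lemma actr_mul v b c : actr v (mul b c) = actr (actr v b) c + actl b (actr v c).
Proof.
case: bimod => _ [_ /(_ (v, 0) (0, b) (0, c)) /(congr1 fst)].
by rewrite /split_product /= !zero_actions.
Qed.

Lemma actr_actlDactr0 b v c : actr (actl b v + actr v b) c = 0.
Proof.
rewrite (linear_funD (actr_linear_l c)).
have -> : actr (actl b v) c = actl b (actr v c) - actr v (mul b c).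
  by rewrite actl_actr addrK.
have -> : actr (actr v b) c = actr v (mul b c) - actl b (actr v c).
  by rewrite actr_mul addrK.
by rewrite addrA subrK subrr.
Qed.

Lemma nilpotent_actr a : nilpotent_map (actl a) -> nilpotent_map (actr ^~ a).
Proof.
move=> [m Tm0]; exists m.+1 => v.
have actr2 w : actr (actr w a) a = - actr (actl a w) a.
  apply/eqP; rewrite -addr_eq0 addrC -(linear_funD (actr_linear_l a)).
  by rewrite actr_actlDactr0.
have iter_actr k w : iter k.+1 (actr ^~ a) w = (-1) ^+ k *: actr (iter k (actl a) w) a.
  elim: k => [|k IHk]; first by rewrite scale1r.
  by rewrite iterS IHk (linear_funZ (actr_linear_l a)) actr2 exprS mulN1r scaleNr scalerN.
by rewrite iter_actr Tm0 actr0 scaler0.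
Qed.

Definition actl_hom : 'Hom(L, 'End(V)) := linfun (fun a => linfun (actl a)).

Lemma actl_homE a v : actl_hom a v = actl a v.
Proof.
rewrite linfun_linE ?linfun_linE // => k x y; apply/lfunP => w.
by rewrite add_lfunE scale_lfunE !linfun_linE //; apply: actl_linear_l.
Qed.

Definition actr_kernel : {vspace V} :=
  lker (linfun (fun v => linfun (actr v)) : 'Hom(V, 'Hom(L, V))).

Lemma actr_kernelP v : reflect (forall a, actr v a = 0) (v \in actr_kernel).
Proof.
rewrite memv_ker linfun_linE; last first.
  move=> k x y; apply/lfunP => a.
  by rewrite add_lfunE scale_lfunE !linfun_linE //; apply: actr_linear_l.
apply: (iffP eqP) => [/lfunP actr_v0 a | actr_v0].
  by rewrite -(linfun_linE (actr_linear v)) actr_v0 zero_lfunE.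
by apply/lfunP => a; rewrite linfun_linE // zero_lfunE.
Qed.

Lemma lie_closed_actl : lie_closed (limg actl_hom).
Proof.
move=> _ _ /memv_imgP[a _ ->] /memv_imgP[b _ ->].
have -> : lfun_br (actl_hom a) (actl_hom b) = actl_hom (mul a b).
  by apply/lfunP => v; rewrite lfun_brE !actl_homE actl_mul addrK.
exact/memv_img/memvf.
Qed.

Lemma nilpotent_actl_img : (forall a, nilpotent_map (actl a)) ->
  {in limg actl_hom, forall g : 'End(V), nilpotent_map g}.
Proof.
move=> Tnil _ /memv_imgP[a _ ->]; have [m Tm0] := Tnil a.
by exists m => v; rewrite -(Tm0 v); apply: eq_iter; exact: actl_homE.
Qed.

Lemma stable_actr_kernel : stable (limg actl_hom) actr_kernel.
Proof.
move=> _ v /memv_imgP[a _ ->] /actr_kernelP actr_v0; rewrite actl_homE.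
apply/actr_kernelP => c; have := actl_actr a v c.
by rewrite !actr_v0 actlr0 addr0.
Qed.

End LeibnizBimodule.

Theorem theorem2 (F : fieldType) (L V : vectType F)
  (mul : L -> L -> L) (actl : L -> V -> V) (actr : V -> L -> V) :
  left_Leibniz_algebra mul ->
  Leibniz_bimodule mul actl actr ->
  (exists v0 : V, v0 != 0) ->
  (forall a : L, nilpotent_map (actl a)) ->
  (forall a : L, nilpotent_map (fun v => actr v a)) /\
  (exists v : V, v != 0 /\ forall a : L, actl a v = 0 /\ actr v a = 0).
Proof.
move=> _ bimod [v0 v0_neq0] Tnil; split=> [a|]; first exact: (nilpotent_actr bimod (Tnil a)).
have Glie := lie_closed_actl bimod; have Gnil := nilpotent_actl_img bimod Tnil.
have actl_homT a u : {in limg (actl_hom actl), forall g : 'End(V), g u = 0} -> actl a u = 0.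
  by move=> Tu; rewrite -(actl_homE bimod) Tu ?memv_img ?memvf.
have [K0|nK0] := eqVneq (actr_kernel actr) 0%VS.
  have full_neq0 : fullv != 0%VS :> {vspace V}.
    by apply: contraNneq v0_neq0 => V0; rewrite -memv0 -V0 memvf.
  have stable_full : stable (limg (actl_hom actl)) fullv by move=> g x _ _; exact: memvf.
  have [u _ [u_neq0 Tu]] := engel_common_kernel Glie Gnil stable_full full_neq0.
  exists u; split=> // a; have Tu0 := actl_homT a u Tu; split=> //.
  have : actl a u + actr u a \in actr_kernel actr.
    by apply/(actr_kernelP bimod); exact: (actr_actlDactr0 bimod).
  by rewrite K0 memv0 Tu0 add0r => /eqP.
have [u /(actr_kernelP bimod) Su0 [u_neq0 Tu]] :=
  engel_common_kernel Glie Gnil (stable_actr_kernel bimod) nK0.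
by exists u; split=> // a; split; [exact: actl_homT | exact: Su0].
Qed.
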